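(* There exist graphs $G,H$ embedded in $\mathbb{R}^2$, each equipped with the height filtration, such that the FB-persistence diagrams of $G$ and $H$ differ, but the extended persistence diagrams of $G$ and $H$ coincide (in degrees $0$ and $1$).
   Context: Graphs are finite, undirected, possibly with multi-edges. For a graph embedded in $\mathbb{R}^2$, the height filtration is the vertex-based filtration function $f(v)=$ $y$-coordinate of $v$, $f(e)=\max(f(v),f(w))$ for $e=(v,w)$. For a filtration function $f$ with distinct values $a_0<\dots<a_n$, $G_{-1}=\emptyset$, $G_i=f^{-1}((-\infty,a_i])$; the intermediate complex $\mathrm{IC}_i(G,f)$ is the subgraph consisting of the vertices and edges of $G_i\setminus G_{i-1}$ together with endpoints of those edges. FB-persistence: the persistence diagrams (from the interval decomposition of $H_k(-;\mathbb{Z}/2)$, indexed by position) of $G_0\subset\dots\subset G_n=G\to Z_1\to\dots\to Z_{n+1}=\text{point}$, where $Z_1=G/\mathrm{IC}_n$ and $Z_{j+1}=Z_j/( *_j\cup\mathrm{IC}_{n-j})$, $*_j$ being the point to which previously contracted pieces were collapsed. Extended persistence: regard $G$ as a topological space and extend $f$ linearly along edges; set $G_a=\{x: f(x)\le a\}$, $G^a=\{x:f(x)\ge a\}$; the extended persistence diagrams are the persistence diagrams of $0\to H_k(G_{a_0})\to\dots\to H_k(G_{a_n})=H_k(G)\to H_k(G,G^{a_n})\to\dots\to H_k(G,G^{a_0})$ (maps induced by inclusions of spaces and pairs), $k=0,1$, with $\mathbb{Z}/2$ coefficients. *)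

From Stdlib Require Import Reals.
From mathcomp Require Import all_boot all_order all_algebra.
Set Implicit Arguments.
Unset Strict Implicit.
Unset Printing Implicit Defensive.
Import GRing.Theory.

(* An edge e joins [src e] and [tgt e]; the orientation is irrelevant. *)
Record graph := Graph {
  vert : finType;
  edge : finType;
  src : edge -> vert;
  tgt : edge -> vert }.

Record egraph := EGraph {
  eg :> graph;
  pos : vert eg -> (R * R)%type;
  curve : edge eg -> R -> (R * R)%type;
  pos_inj : forall v w, pos v = pos w -> v = w;
  no_loop : forall e : edge eg, src e <> tgt e;
  curve_cont1 : forall e, continuity (fun t => fst (curve e t));
  curve_cont2 : forall e, continuity (fun t => snd (curve e t));
  curve_src : forall e, curve e R0 = pos (src e);
  curve_tgt : forall e, curve e R1 = pos (tgt e);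
  curve_inj : forall e s t, Rle R0 s /\ Rle s R1 -> Rle R0 t /\ Rle t R1 ->
                curve e s = curve e t -> s = t;
  curve_avoid : forall e t v, Rlt R0 t /\ Rlt t R1 -> curve e t <> pos v;
  curve_disj : forall e e' s t, e <> e' -> Rlt R0 s /\ Rlt s R1 -> Rlt R0 t /\ Rlt t R1 ->
                curve e s <> curve e' t }.

Definition ht (G : egraph) (v : vert G) : R := snd (pos v).

Definition beqR (x y : R) : bool := if Req_EM_T x y then true else false.
Definition bltR (x y : R) : bool := if Rlt_dec x y then true else false.

Definition canon (G : egraph) (w : vert G) : bool :=
  [forall u : vert G, beqR (ht u) (ht w) ==> (enum_rank w <= enum_rank u)%N].

(* number of distinct values a_0 < ... < a_n of f, i.e. n+1 *)
Definition nlev (G : egraph) : nat := #|[set w : vert G | canon w]|.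

(* lvl v = i  iff  f(v) = a_i *)
Definition lvl (G : egraph) (v : vert G) : nat :=
  #|[set w : vert G | canon w && bltR (ht w) (ht v)]|.

(* f(e) = max(f(v),f(w)) = a_(elvl e) *)
Definition elvl (G : egraph) (e : edge G) : nat :=
  maxn (lvl (src e)) (lvl (tgt e)).

(* Cellular spaces built from G: a subgraph K together with a subgraph *)
(* A of K which is either collapsed to a single point * (star = true;  *)
(* quotient space K/A) or divided out (star = false; the pair (K,A),   *)
(* relative homology).  With A empty both give K itself.               *)
Record cspace (G : graph) := CSpace {
  inKv : pred (vert G); inKe : pred (edge G);
  inAv : pred (vert G); inAe : pred (edge G);
  star : bool }.

Definition F2 := 'F_2.

Local Open Scope ring_scope.

Section Cells.
Variable G : graph.
Implicit Types X Y : cspace G.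

Definition has_star X : bool := star X && [exists v, inAv X v].

(* 0-cells: option (vert G), None standing for the point *. *)
Definition cell0 X (c : option (vert G)) : bool :=
  match c with None => has_star X | Some v => inKv X v && ~~ inAv X v end.
Definition cell1 X (e : edge G) : bool := inKe X e && ~~ inAe X e.

(* coefficient of the 0-cell c' in the image in Y of the 0-cell c *)
Definition imgc Y (c c' : option (vert G)) : bool :=
  match c with
  | Some v => if inAv Y v then (c' == None) && has_star Y else c' == Some v
  | None => (c' == None) && has_star Y
  end.

Definition d0 := #|{: option (vert G)}|.
Definition d1 := #|{: edge G}|.

(* cellular chain groups, as row spaces inside F2^(cells) *)
Definition C1 X : 'M[F2]_d1 :=
  \matrix_(i, j) ((i == j) && cell1 X (enum_val i))%:R.
Definition C0 X : 'M[F2]_d0 :=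
  \matrix_(i, j) ((i == j) && cell0 X (enum_val i))%:R.
Definition bnd X : 'M[F2]_(d1, d0) :=
  \matrix_(i, j) ((imgc X (Some (src (enum_val i))) (enum_val j))%:R +
                  (imgc X (Some (tgt (enum_val i))) (enum_val j))%:R).

(* cycles and boundaries in degrees 0 and 1 (no 2-cells) *)
Definition Z0 X : 'M[F2]_d0 := C0 X.
Definition B0 X : 'M[F2]_(d1, d0) := C1 X *m bnd X.
Definition Z1 X : 'M[F2]_d1 := (C1 X :&: kermx (bnd X))%MS.
Definition B1 X : 'M[F2]_d1 := 0.

(* cellular chain maps induced by the identity of G / the quotient maps,
   into the space Y *)
Definition M0 Y : 'M[F2]_d0 :=
  \matrix_(i, j) (imgc Y (enum_val i) (enum_val j))%:R.
Definition M1 Y : 'M[F2]_d1 :=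
  \matrix_(i, j) ((i == j) && cell1 Y (enum_val i))%:R.

End Cells.

(* Persistence diagram of a module V_0 -> V_1 -> ... -> V_N, V_p =     *)
(* Z p / B p (subspaces of F2^d), maps induced by the matrices M p :   *)
(* V_p -> V_(p+1).  Multiplicity of the interval [b,e] in the interval *)
(* decomposition, via the rank function r(i,j) = rank (V_i -> V_j).    *)
Fixpoint mprod d (M : nat -> 'M[F2]_d) (i k : nat) : 'M[F2]_d :=
  match k with
  | 0 => 1%:M
  | k'.+1 => mprod M i k' *m M (i + k')%N
  end.

Definition prank m1 m2 d (Z : nat -> 'M[F2]_(m1, d)) (B : nat -> 'M[F2]_(m2, d))
  (M : nat -> 'M[F2]_d) (i j : nat) : int :=
  (\rank (Z i *m mprod M i (j - i) + B j)%MS)%:Z - (\rank (B j))%:Z.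

Definition pdiag (N : nat) (r : nat -> nat -> int) (b e : nat) : int :=
  if (b <= e <= N)%N then
    (r b e - (if b == 0%N then 0 else r b.-1 e)
           - (if e == N then 0 else r b e.+1)
           + (if (b == 0%N) || (e == N) then 0 else r b.-1 e.+1))%R
  else 0%R.

Definition dgm (G : graph) (N : nat) (S : nat -> cspace G) (k : nat) :
  nat -> nat -> int :=
  if k == 0%N then
    pdiag N (prank (fun p => Z0 (S p)) (fun p => B0 (S p))
                   (fun p => M0 (S p.+1)))
  else
    pdiag N (prank (fun p => Z1 (S p)) (fun p => B1 (S p))
                   (fun p => M1 (S p.+1))).

Section Filtrations.
Variable G : egraph.

Definition subl (i : nat) : cspace G :=
  @CSpace G (fun v => lvl v <= i)%N (fun e => elvl e <= i)%N
            pred0 pred0 false.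

(* Z_j = G / (IC_n u ... u IC_(n-j+1)), everything collapsed to one point;
   the union of IC_m, m >= t, consists of the cells of level >= t together
   with endpoints of edges of level >= t. *)
Definition fbquot (j : nat) : cspace G :=
  let t := (nlev G - j)%N in
  @CSpace G predT predT
    (fun v => (t <= lvl v)%N ||
              [exists e, (t <= elvl e)%N && ((src e == v) || (tgt e == v))])
    (fun e => t <= elvl e)%N true.

(* FB sequence: positions 0..n are G_0..G_n, positions n+1..2n+1 are Z_1..Z_(n+1) *)
Definition fbseq (p : nat) : cspace G :=
  if (p < nlev G)%N then subl p else fbquot (p - nlev G).+1.

(* pair (G, G^(a_i)), with G^(a_i) replaced by the subcomplex of cells
   with f >= a_i (onto which it deformation retracts) *)
Definition suppair (i : nat) : cspace G :=
  @CSpace G predT predT (fun v => i <= lvl v)%N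
    (fun e => i <= minn (lvl (src e)) (lvl (tgt e)))%N false.

(* extended sequence: positions 0..n are G_(a_0)..G_(a_n), positions
   n+1..2n+1 are (G,G^(a_n)), ..., (G,G^(a_0)) *)
Definition extseq (p : nat) : cspace G :=
  if (p < nlev G)%N then subl p else suppair ((nlev G).-1 - (p - nlev G))%N.

Definition FBdgm (k : nat) := dgm (nlev G).*2.-1 fbseq k.
Definition EPdgm (k : nat) := dgm (nlev G).*2.-1 extseq k.

End Filtrations.

From Pilot Require Import Defs.
From Stdlib Require Import Reals Lra FunctionalExtensionality.
From mathcomp Require Import all_boot all_order all_algebra mxabelem.

(* The digon (vertices at heights 0 and 1 joined by two parallel edges) and the triangle
   (0,0), (1,0), (0,1) both have two height levels, one component and one cycle, born at the
   top level.  In the extended sequence the cycle survives in H_1(X, X^{a_1}) = F_2 and dies in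
   H_1(X, X) for both graphs, so the extended diagrams agree.  In the FB sequence, however,
   the top intermediate complex IC_1 is the whole digon, so Z_1 is a point and the cycle dies
   at once, whereas IC_1 of the triangle misses the bottom edge, so Z_1 is a circle and the
   cycle lives one step longer.
   The diagrams are computed by reflection: a matrix over F_2 is represented by the bit lists
   of its rows, a subspace by the list of all its vectors, and the rank is log_2 of the number
   of distinct vectors. *)

Set Implicit Arguments.
Unset Strict Implicit.
Unset Printing Implicit Defensive.

Section BitVectors.
Local Open Scope ring_scope.

Lemma F2_bool (x : F2) : x = (x == 1)%:R.
Proof. by case: x => [[|[|k]] Hk] //; apply: val_inj. Qed.

Lemma F2_nat_eq1 (b : bool) : ((b%:R : F2) == 1) = b.
Proof. by case: b. Qed.

Lemma F2_eq1D (x y : F2) : (x + y == 1) = (x == 1) (+) (y == 1).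
Proof. by rewrite (F2_bool x) (F2_bool y); case: (x == 1); case: (y == 1). Qed.

Lemma F2_eq1M (x y : F2) : (x * y == 1) = (x == 1) && (y == 1).
Proof. by rewrite (F2_bool x) (F2_bool y); case: (x == 1); case: (y == 1). Qed.

Lemma F2_natD (a b : bool) : (a%:R + b%:R : F2) = (a (+) b)%:R.
Proof. by rewrite [LHS]F2_bool F2_eq1D !F2_nat_eq1. Qed.

Definition bxor (s t : seq bool) : seq bool := [seq p.1 (+) p.2 | p <- zip s t].
Definition bzero (n : nat) : seq bool := nseq n false.
Definition bcomb (n : nat) (c : seq bool) (L : seq (seq bool)) : seq bool :=
  foldr (fun p acc => if p.1 then bxor p.2 acc else acc) (bzero n) (zip c L).
Fixpoint bitseqs (n : nat) : seq (seq bool) :=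
  if n is n'.+1 then [seq b :: s | b <- [:: false; true], s <- bitseqs n'] else [:: [::]].

Lemma size_bxor s t : size (bxor s t) = minn (size s) (size t).
Proof. by rewrite size_map size_zip. Qed.

Lemma nth_bxor s t j : size s = size t ->
  nth false (bxor s t) j = nth false s j (+) nth false t j.
Proof.
move=> Est; case: (ltnP j (size s)) => Hj.
  by rewrite (nth_map (false, false)) ?nth_zip // size_zip -Est minnn.
by rewrite !nth_default ?size_bxor -?Est ?minnn.
Qed.

Lemma size_bcomb n c L : all (fun r => size r == n) L -> size (bcomb n c L) = n.
Proof.
elim: c L => [|b c IH] [|r L] /=; rewrite ?size_nseq // => /andP[/eqP Hr HL].
by case: b; rewrite ?size_bxor IH // Hr minnn.
Qed.

Lemma nth_bcomb n c L j : all (fun r => size r == n) L ->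
  nth false (bcomb n c L) j =
  foldr (fun p acc => (p.1 && nth false p.2 j) (+) acc) false (zip c L).
Proof.
elim: c L => [|b c IH] [|r L] /=; rewrite ?nth_nseq ?if_same // => /andP[/eqP Hr HL].
by case: b; rewrite /= -IH // nth_bxor ?size_bcomb.
Qed.

Lemma mem_bitseqs n s : (s \in bitseqs n) = (size s == n).
Proof.
elim: n s => [|n IH] s; first by case: s.
apply/allpairsP/idP => [[[b t] /= [_ Ht ->]]|]; first by rewrite /= eqSS -IH.
by case: s => [|b s] //=; rewrite eqSS -IH => Hs; exists (b, s); case: b.
Qed.

End BitVectors.

Section RowBits.
Local Open Scope ring_scope.

Definition bits_of_row n (v : 'rV[F2]_n) : seq bool := [seq v 0 j == 1 | j <- enum 'I_n].
Definition row_of_bits n (s : seq bool) : 'rV[F2]_n := \row_j (nth false s j)%:R.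

Lemma size_bits_of_row n (v : 'rV[F2]_n) : size (bits_of_row v) = n.
Proof. by rewrite size_map size_enum_ord. Qed.

Lemma nth_bits_of_row n (v : 'rV[F2]_n) (j : 'I_n) :
  nth false (bits_of_row v) j = (v 0 j == 1).
Proof. by rewrite (nth_map j) ?size_enum_ord // nth_ord_enum. Qed.

Lemma bits_of_row_inj n : injective (@bits_of_row n).
Proof.
move=> u v E; apply/rowP => j.
by rewrite (F2_bool (u 0 j)) (F2_bool (v 0 j)) -!nth_bits_of_row E.
Qed.

Lemma eq_bits_of_row n (v : 'rV[F2]_n) s :
  size s = n -> (forall j : 'I_n, nth false s j = (v 0 j == 1)) -> bits_of_row v = s.
Proof.
move=> Hs Hv; apply: (@eq_from_nth _ false); rewrite size_bits_of_row // => i Hi.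
by rewrite (nth_bits_of_row v (Ordinal Hi)) -(Hv (Ordinal Hi)).
Qed.

Lemma row_of_bitsK n s : size s = n -> bits_of_row (row_of_bits n s) = s.
Proof. by move=> Hs; apply: eq_bits_of_row => // j; rewrite mxE F2_nat_eq1. Qed.

Lemma bits_of_rowD n (u v : 'rV[F2]_n) :
  bits_of_row (u + v) = bxor (bits_of_row u) (bits_of_row v).
Proof.
apply: eq_bits_of_row => [|j]; first by rewrite size_bxor !size_bits_of_row minnn.
by rewrite nth_bxor ?size_bits_of_row // !nth_bits_of_row mxE F2_eq1D.
Qed.

Lemma bits_of_row0 n : bits_of_row (0 : 'rV[F2]_n) = bzero n.
Proof. by apply: eq_bits_of_row => [|j]; rewrite ?size_nseq // nth_nseq ltn_ord mxE. Qed.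

Definition mx_rows m n (A : 'M[F2]_(m, n)) (L : seq (seq bool)) :=
  [/\ size L = m, all (fun r => size r == n) L &
      forall (i : 'I_m) (j : 'I_n), A i j = (nth false (nth [::] L i) j)%:R].

Lemma bits_of_row_mul m n (u : 'rV[F2]_m) (A : 'M[F2]_(m, n)) L :
  mx_rows A L -> bits_of_row (u *m A) = bcomb n (bits_of_row u) L.
Proof.
case=> HL Hsz HA; apply: eq_bits_of_row => [|j]; first by rewrite size_bcomb.
have -> : L = [seq nth [::] L (i : 'I_m) | i <- enum 'I_m].
  apply: (@eq_from_nth _ [::]) => [|i]; first by rewrite size_map size_enum_ord.
  rewrite HL => Hi.
  by rewrite (nth_map (Ordinal Hi)) ?size_enum_ord // nth_enum_ord.
rewrite nth_bcomb ?mxE; last first.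
  by apply/allP => _ /mapP[i _ ->]; apply: (allP Hsz); rewrite mem_nth ?HL.
rewrite [index_enum _]unlock -enumT /bits_of_row.
elim: (enum 'I_m) => [|i r IH]; rewrite ?big_nil // big_cons /= F2_eq1D IH.
by rewrite F2_eq1M HA F2_nat_eq1.
Qed.

Definition rowspace_list m n (A : 'M[F2]_(m, n)) (L : seq (seq bool)) :=
  (forall v : 'rV[F2]_n, (v <= A)%MS = (bits_of_row v \in L)) /\
  all (fun s => size s == n) L.

Lemma rowspace_list_mem m n (A : 'M[F2]_(m, n)) L s :
  rowspace_list A L -> s \in L -> exists2 v, (v <= A)%MS & s = bits_of_row v.
Proof.
case=> HA /allP Hsz Hs; have Hn : size s = n by apply/eqP/Hsz.
by exists (row_of_bits n s); rewrite ?HA row_of_bitsK.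
Qed.

Lemma rank_rowspace_list m n (A : 'M[F2]_(m, n)) L :
  rowspace_list A L -> \rank A = trunc_log 2 (size (undup L)).
Proof.
move=> HAL; have [HA _] := HAL.
suff <- : #|rowg A| = size (undup L) by rewrite card_rowg card_Fp // trunc_expnK.
rewrite cardE -(size_map (@bits_of_row n)); apply/perm_size/uniq_perm.
- by rewrite (map_inj_uniq (@bits_of_row_inj n)) enum_uniq.
- exact: undup_uniq.
move=> s; rewrite mem_undup; apply/mapP/idP => [[v]|/(rowspace_list_mem HAL)[v Hv ->]].
  by rewrite mem_enum mem_rowg HA => H ->.
by exists v; rewrite // mem_enum mem_rowg.
Qed.

Lemma rowspace_list_rows m n (A : 'M[F2]_(m, n)) L :
  mx_rows A L -> rowspace_list A [seq bcomb n c L | c <- bitseqs m].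
Proof.
move=> HAL; have [_ Hsz _] := HAL; split => [v|]; last first.
  by apply/allP => _ /mapP[c _ ->]; rewrite size_bcomb.
apply/submxP/mapP => [[u ->]|[c Hc Ev]].
  by exists (bits_of_row u); rewrite ?mem_bitseqs ?size_bits_of_row // (bits_of_row_mul _ HAL).
move: Hc; rewrite mem_bitseqs => /eqP Hc.
by exists (row_of_bits m c); apply: bits_of_row_inj; rewrite (bits_of_row_mul _ HAL) row_of_bitsK.
Qed.

Lemma rowspace_list_mul m n p (A : 'M[F2]_(m, n)) (P : 'M[F2]_(n, p)) L LP :
  rowspace_list A L -> mx_rows P LP -> rowspace_list (A *m P) [seq bcomb p s LP | s <- L].
Proof.
move=> HAL HP; have [HA _] := HAL; have [_ HszP _] := HP; split => [v|]; last first.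
  by apply/allP => _ /mapP[s _ ->]; rewrite size_bcomb.
apply/submxP/mapP => [[u ->]|[_ /(rowspace_list_mem HAL)[w /submxP[u ->] ->]]].
  by exists (bits_of_row (u *m A)); rewrite -?HA ?submxMl // mulmxA (bits_of_row_mul _ HP).
by rewrite -(bits_of_row_mul _ HP) => /bits_of_row_inj ->; exists u; rewrite mulmxA.
Qed.

Lemma rowspace_list_cap m1 m2 n (A : 'M[F2]_(m1, n)) (B : 'M[F2]_(m2, n)) L1 L2 :
  rowspace_list A L1 -> rowspace_list B L2 ->
  rowspace_list (A :&: B)%MS [seq s <- L1 | s \in L2].
Proof.
move=> [HA Hsz] [HB _]; split => [v|]; first by rewrite sub_capmx HA HB mem_filter andbC.
by apply/allP => s; rewrite mem_filter => /andP[_ /(allP Hsz)].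
Qed.

Lemma rowspace_list_ker m n (B : 'M[F2]_(m, n)) LB : mx_rows B LB ->
  rowspace_list (kermx B) [seq s <- bitseqs m | bcomb n s LB == bzero n].
Proof.
move=> HB; split => [v|]; last by apply/allP => s; rewrite mem_filter mem_bitseqs => /andP[].
rewrite sub_kermx mem_filter mem_bitseqs size_bits_of_row eqxx andbT.
by rewrite -(bits_of_row_mul _ HB) -(bits_of_row0 n) (inj_eq (@bits_of_row_inj n)).
Qed.

Lemma rowspace_list0 m n : rowspace_list (0 : 'M[F2]_(m, n)) [:: bzero n].
Proof.
split => [v|]; last by rewrite /= size_nseq eqxx.
rewrite inE -(bits_of_row0 n) (inj_eq (@bits_of_row_inj n)).
by apply/idP/eqP => [/submx0null|->]; last exact: sub0mx.
Qed.

Lemma rowspace_list_adds m1 m2 n (A : 'M[F2]_(m1, n)) (B : 'M[F2]_(m2, n)) L1 L2 :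
  rowspace_list A L1 -> rowspace_list B L2 ->
  rowspace_list (A + B)%MS [seq bxor s t | s <- L1, t <- L2].
Proof.
move=> HAL HBL; have [[HA Hsz1] [HB Hsz2]] := (HAL, HBL); split => [v|]; last first.
  apply/allP => _ /allpairsP[[s t] /= [Hs Ht ->]].
  by rewrite size_bxor (eqP (allP Hsz1 _ Hs)) (eqP (allP Hsz2 _ Ht)) minnn.
apply/sub_addsmxP/allpairsP => [[u ->]|[[s t] /= [Hs Ht Ev]]].
  exists (bits_of_row (u.1 *m A), bits_of_row (u.2 *m B)).
  by rewrite bits_of_rowD -HA -?HB ?submxMl.
have [a /submxP[ua ->] Es] := rowspace_list_mem HAL Hs.
have [b /submxP[ub ->] Et] := rowspace_list_mem HBL Ht.
by exists (ua, ub); apply: bits_of_row_inj; rewrite Ev bits_of_rowD -Es -Et.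
Qed.

Definition bmul n (LA LB : seq (seq bool)) := [seq bcomb n r LB | r <- LA].
Definition bmx m n (f : nat -> nat -> bool) :=
  [seq [seq f i j | j <- iota 0 n] | i <- iota 0 m].

Lemma mx_rows_fun m n (A : 'M[F2]_(m, n)) (f : nat -> nat -> bool) :
  (forall (i : 'I_m) (j : 'I_n), A i j = (f i j)%:R) -> mx_rows A (bmx m n f).
Proof.
move=> HA; split; first by rewrite size_map size_iota.
  by apply/allP => _ /mapP[i _ ->]; rewrite size_map size_iota.
move=> i j; rewrite HA (nth_map 0%N) ?size_iota // (nth_map 0%N) ?size_iota //.
by rewrite !nth_iota.
Qed.

Lemma mx_rows1 n : mx_rows (1%:M : 'M[F2]_n) (bmx n n (fun i j => i == j)).
Proof. by apply: mx_rows_fun => i j; rewrite mxE. Qed.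

Lemma mx_rows_mul m n p (A : 'M[F2]_(m, n)) (B : 'M[F2]_(n, p)) LA LB :
  mx_rows A LA -> mx_rows B LB -> mx_rows (A *m B) (bmul p LA LB).
Proof.
move=> HAL HB; have [HL Hsz HA] := HAL; have [_ HszB _] := HB; split.
- by rewrite size_map.
- by apply/allP => _ /mapP[r _ ->]; rewrite size_bcomb.
move=> i j; have Ei : bits_of_row (row i A) = nth [::] LA i.
  apply: eq_bits_of_row => [|k]; first by apply/eqP/(allP Hsz); rewrite mem_nth ?HL.
  by rewrite mxE HA F2_nat_eq1.
have -> : (A *m B) i j = row i (A *m B) 0 j by rewrite [RHS]mxE.
rewrite (nth_map [::]) ?HL // -Ei -(bits_of_row_mul _ HB) nth_bits_of_row row_mul.
exact: F2_bool.
Qed.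

Fixpoint bmprod d (LM : nat -> seq (seq bool)) (i k : nat) : seq (seq bool) :=
  if k is k'.+1 then bmul d (bmprod d LM i k') (LM (i + k')%N)
  else bmx d d (fun i j => i == j).

Lemma mx_rows_mprod d (M : nat -> 'M[F2]_d) LM i k :
  (forall p, mx_rows (M p) (LM p)) -> mx_rows (mprod M i k) (bmprod d LM i k).
Proof.
move=> HM; elim: k => [|k IH] /=; first exact: mx_rows1.
exact: mx_rows_mul.
Qed.

Definition brank (L : seq (seq bool)) : int := (trunc_log 2 (size (undup L)))%:Z.

Definition bprank d (LZ LB LM : nat -> seq (seq bool)) (i j : nat) : int :=
  brank [seq bxor s t | s <- bmul d (LZ i) (bmprod d LM i (j - i)), t <- LB j]
  - brank (LB j).

Lemma prank_bits m1 m2 d (Z : nat -> 'M[F2]_(m1, d)) (B : nat -> 'M[F2]_(m2, d))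
    (M : nat -> 'M[F2]_d) LZ LB LM i j :
  (forall p, rowspace_list (Z p) (LZ p)) -> (forall p, rowspace_list (B p) (LB p)) ->
  (forall p, mx_rows (M p) (LM p)) -> prank Z B M i j = bprank d LZ LB LM i j.
Proof.
move=> HZ HB HM; have HZM := rowspace_list_mul (HZ i) (mx_rows_mprod i (j - i) HM).
rewrite /prank /bprank /brank (rank_rowspace_list (HB j)).
by rewrite (rank_rowspace_list (rowspace_list_adds HZM (HB j))).
Qed.

End RowBits.

Lemma existsb_has_enum (T : finType) (P : pred T) : [exists x, P x] = has P (enum T).
Proof. by apply/existsP/hasP => [[x Px]|[x _ Px]]; exists x; rewrite ?mem_enum. Qed.

(* [exists _, _], [#|_|] and the real-valued heights do not reduce under [vm_compute]; the
   [_enum] and [_of] variants below replace them by explicit lists and integer levels. *)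
Section CellularBits.
Local Open Scope ring_scope.
Variable G : graph.
Variables (vl : seq (option (vert G))) (vs : seq (vert G)) (el : seq (edge G)).
Variable e0 : edge G.
Variables n0 n1 : nat.
Hypothesis d0E : Defs.d0 G = n0.
Hypothesis d1E : Defs.d1 G = n1.
Hypothesis enum_cell0 : enum {: option (vert G)} = vl.
Hypothesis enum_vert : enum (vert G) = vs.
Hypothesis enum_edge : enum (edge G) = el.

Definition has_star_enum (X : cspace G) := star X && has (inAv X) vs.
Definition cell0_enum (X : cspace G) c :=
  if c is Some v then inKv X v && ~~ inAv X v else has_star_enum X.
Definition imgc_enum (Y : cspace G) (c c' : option (vert G)) : bool :=
  match c with
  | Some v => if inAv Y v then (c' == None) && has_star_enum Y else c' == Some v
  | None => (c' == None) && has_star_enum Y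
  end.

Lemma has_starE X : has_star X = has_star_enum X.
Proof. by rewrite /has_star /has_star_enum existsb_has_enum enum_vert. Qed.

Lemma cell0E X c : cell0 X c = cell0_enum X c.
Proof. by case: c => [v|] //=; rewrite has_starE. Qed.

Lemma imgcE X c c' : imgc X c c' = imgc_enum X c c'.
Proof. by case: c => [v|] /=; rewrite has_starE. Qed.

Lemma enum_val_cell0 (i : 'I_(Defs.d0 G)) : enum_val i = nth None vl i.
Proof. by rewrite (enum_val_nth None) enum_cell0. Qed.

Lemma enum_val_edge (i : 'I_(Defs.d1 G)) : enum_val i = nth e0 el i.
Proof. by rewrite (enum_val_nth e0) enum_edge. Qed.

Definition C0_bits X := bmx n0 n0 (fun i j => (i == j) && cell0_enum X (nth None vl i)).
Definition C1_bits X := bmx n1 n1 (fun i j => (i == j) && cell1 X (nth e0 el i)).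
Definition bnd_bits X := bmx n1 n0 (fun i j =>
  imgc_enum X (Some (src (nth e0 el i))) (nth None vl j) (+)
  imgc_enum X (Some (tgt (nth e0 el i))) (nth None vl j)).
Definition M0_bits X := bmx n0 n0 (fun i j => imgc_enum X (nth None vl i) (nth None vl j)).

Lemma mx_rows_C0 X : mx_rows (C0 X) (C0_bits X).
Proof. by rewrite /C0_bits -d0E; apply: mx_rows_fun => i j; rewrite mxE enum_val_cell0 cell0E. Qed.

Lemma mx_rows_C1 X : mx_rows (Defs.C1 X) (C1_bits X).
Proof. by rewrite /C1_bits -d1E; apply: mx_rows_fun => i j; rewrite mxE enum_val_edge. Qed.

Lemma mx_rows_M1 X : mx_rows (M1 X) (C1_bits X).
Proof. by rewrite /C1_bits -d1E; apply: mx_rows_fun => i j; rewrite mxE enum_val_edge. Qed.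

Lemma mx_rows_bnd X : mx_rows (bnd X) (bnd_bits X).
Proof.
rewrite /bnd_bits -d0E -d1E; apply: mx_rows_fun => i j.
by rewrite mxE enum_val_cell0 enum_val_edge !imgcE F2_natD.
Qed.

Lemma mx_rows_M0 X : mx_rows (M0 X) (M0_bits X).
Proof. by rewrite /M0_bits -d0E; apply: mx_rows_fun => i j; rewrite mxE !enum_val_cell0 imgcE. Qed.

Definition C1_span X := [seq bcomb n1 c (C1_bits X) | c <- bitseqs n1].
Definition Z0_list X := [seq bcomb n0 c (C0_bits X) | c <- bitseqs n0].
Definition B0_list X := bmul n0 (C1_span X) (bnd_bits X).
Definition Z1_list X :=
  [seq s <- C1_span X | s \in [seq s <- bitseqs n1 | bcomb n0 s (bnd_bits X) == bzero n0]].

Lemma rowspace_list_Z0 X : rowspace_list (Defs.Z0 X) (Z0_list X).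
Proof. by rewrite /Z0_list -d0E; exact: rowspace_list_rows (mx_rows_C0 X). Qed.

Lemma rowspace_list_B0 X : rowspace_list (B0 X) (B0_list X).
Proof.
rewrite /B0_list /C1_span -d0E -d1E.
exact: rowspace_list_mul (rowspace_list_rows (mx_rows_C1 X)) (mx_rows_bnd X).
Qed.

Lemma rowspace_list_Z1 X : rowspace_list (Z1 X) (Z1_list X).
Proof.
rewrite /Z1_list /C1_span -d0E -d1E.
exact: rowspace_list_cap (rowspace_list_rows (mx_rows_C1 X)) (rowspace_list_ker (mx_rows_bnd X)).
Qed.

Lemma rowspace_list_B1 (X : cspace G) : rowspace_list (Defs.B1 X) [:: bzero n1].
Proof. by rewrite -d1E; exact: rowspace_list0. Qed.

Definition dgm_bits (N : nat) (S : nat -> cspace G) (k : nat) : nat -> nat -> int :=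
  if k == 0%N then
    pdiag N (bprank n0 (fun p => Z0_list (S p)) (fun p => B0_list (S p))
                       (fun p => M0_bits (S p.+1)))
  else
    pdiag N (bprank n1 (fun p => Z1_list (S p)) (fun=> [:: bzero n1])
                       (fun p => C1_bits (S p.+1))).

Lemma dgm_bitsE N S k b e : dgm N S k b e = dgm_bits N S k b e.
Proof.
rewrite /dgm /dgm_bits; case: (k == 0%N); rewrite /pdiag.
  by rewrite !(prank_bits _ _ (fun p => rowspace_list_Z0 (S p))
                (fun p => rowspace_list_B0 (S p)) (fun p => mx_rows_M0 (S p.+1))) d0E.
by rewrite !(prank_bits _ _ (fun p => rowspace_list_Z1 (S p))
              (fun p => rowspace_list_B1 (S p)) (fun p => mx_rows_M1 (S p.+1))) d1E.
Qed.

End CellularBits.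

Lemma beqR_INR a b : beqR (INR a) (INR b) = (a == b).
Proof.
rewrite /beqR; case: Req_EM_T => [Eab | Hne] /=; first by rewrite (INR_eq _ _ Eab) eqxx.
by apply/esym/eqP => Eab; apply: Hne; rewrite Eab.
Qed.

Lemma bltR_INR a b : bltR (INR a) (INR b) = (a < b)%N.
Proof.
rewrite /bltR; case: Rlt_dec => [lt_ab | /Rnot_lt_le/INR_le/leP] /=.
  exact/esym/ltP/INR_lt.
by rewrite leqNgt => /negbTE.
Qed.

Section IntegralHeights.
Variable G : egraph.
Variable h : vert G -> nat.
Variable K : nat.
Hypothesis htE : forall v, ht v = INR (h v).
Hypothesis h_lt : forall v, (h v < K)%N.
Hypothesis h_onto : forall y, (y < K)%N -> exists v, h v = y.

Lemma canonE w : canon w = [forall u, (h u == h w) ==> (enum_rank w <= enum_rank u)%N].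
Proof. by apply: eq_forallb => u; rewrite !htE beqR_INR. Qed.

Lemma canon_inj w1 w2 : canon w1 -> canon w2 -> h w1 = h w2 -> w1 = w2.
Proof.
rewrite !canonE => /forallP C1 /forallP C2 Eh; apply/enum_rank_inj/val_inj/eqP.
by rewrite eqn_leq (implyP (C1 w2)) ?(implyP (C2 w1)) ?Eh.
Qed.

Lemma exists_canon y : (y < K)%N -> exists2 w, canon w & h w = y.
Proof.
case/h_onto => v Hv; have Pv : h v == y by rewrite Hv.
case: (@arg_minnP _ v (fun u => h u == y) (fun u => val (enum_rank u)) Pv) => w /eqP Hw Hmin.
by exists w; rewrite // canonE; apply/forallP => u; apply/implyP; rewrite Hw => /Hmin.
Qed.

Lemma card_canon_below x : (x <= K)%N -> #|[set w | canon w && (h w < x)%N]| = x.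
Proof.
move=> le_xK; rewrite cardE -(size_map h) -[RHS](size_iota 0).
apply/perm_size/uniq_perm; rewrite ?iota_uniq //.
  rewrite (map_inj_in_uniq _) ?enum_uniq // => w1 w2.
  by rewrite !mem_enum !inE => /andP[C1 _] /andP[C2 _]; apply: canon_inj.
move=> y; rewrite mem_iota add0n; apply/mapP/idP => [[w]|lt_yx].
  by rewrite mem_enum inE => /andP[_ ?] ->.
have [w Cw Hw] := exists_canon (leq_trans lt_yx le_xK).
by exists w; rewrite // mem_enum inE Cw Hw.
Qed.

Lemma lvlE v : lvl v = h v.
Proof.
rewrite /lvl -(@card_canon_below (h v)) 1?ltnW //.
by apply: eq_card => w; rewrite !inE !htE bltR_INR.
Qed.

Lemma nlevE : nlev G = K.
Proof.
by rewrite /nlev -(@card_canon_below K) //; apply: eq_card => w; rewrite !inE h_lt andbT.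
Qed.

End IntegralHeights.

Section Digon.
Local Open Scope R_scope.

Definition digon_graph : graph := @Graph 'I_2 'I_2 (fun=> ord0) (fun=> ord_max).

Definition digon_pos (v : 'I_2) : R * R := (0, INR v).

Definition digon_curve (e : 'I_2) (t : R) : R * R :=
  ((if val e == 0%N then 1 else -1) * (t * (1 - t)), t).

Lemma ord2_cases (v : 'I_2) : v = ord0 \/ v = ord_max.
Proof. by case: v => [[|[|k]] Hk]; [left|right|]; try apply: val_inj. Qed.

Lemma digon_pos_inj (v w : 'I_2) : digon_pos v = digon_pos w -> v = w.
Proof. by move=> [] /INR_eq; apply: val_inj. Qed.

Lemma digon_no_loop (e : edge digon_graph) : src e <> tgt e.
Proof. by []. Qed.

Lemma digon_curve_cont1 (e : 'I_2) : continuity (fun t => fst (digon_curve e t)).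
Proof. rewrite /digon_curve /=; reg. Qed.

Lemma digon_curve_cont2 (e : 'I_2) : continuity (fun t => snd (digon_curve e t)).
Proof. rewrite /digon_curve /=; reg. Qed.

Lemma digon_curve_src (e : 'I_2) : digon_curve e R0 = digon_pos ord0.
Proof. by rewrite /digon_curve /digon_pos /=; f_equal; ring. Qed.

Lemma digon_curve_tgt (e : 'I_2) : digon_curve e R1 = digon_pos ord_max.
Proof. by rewrite /digon_curve /digon_pos /=; f_equal; ring. Qed.

Lemma digon_curve_inj (e : 'I_2) s t : 0 <= s <= 1 -> 0 <= t <= 1 ->
  digon_curve e s = digon_curve e t -> s = t.
Proof. by move=> _ _ []. Qed.

Lemma digon_curve_avoid (e : 'I_2) t v : 0 < t < 1 -> digon_curve e t <> digon_pos v.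
Proof. by move=> Ht [_]; case: (ord2_cases v) => -> /=; lra. Qed.

Lemma digon_curve_disj (e e' : 'I_2) s t : e <> e' -> 0 < s < 1 -> 0 < t < 1 ->
  digon_curve e s <> digon_curve e' t.
Proof.
move=> Hne Hs Ht [Ex Ey]; subst t; move: Hne Ex.
by case: (ord2_cases e) => ->; case: (ord2_cases e') => -> //= _; nra.
Qed.

Definition digon : egraph :=
  @EGraph digon_graph digon_pos digon_curve digon_pos_inj digon_no_loop
    digon_curve_cont1 digon_curve_cont2 digon_curve_src digon_curve_tgt
    digon_curve_inj digon_curve_avoid digon_curve_disj.

End Digon.

Section Triangle.
Local Open Scope R_scope.

Definition tri_a : 'I_3 := @Ordinal 3 0 isT.
Definition tri_b : 'I_3 := @Ordinal 3 1 isT.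
Definition tri_c : 'I_3 := @Ordinal 3 2 isT.

Lemma ord3_cases (v : 'I_3) : [\/ v = tri_a, v = tri_b | v = tri_c].
Proof.
by case: v => [[|[|[|k]]] Hk]; [apply: Or31|apply: Or32|apply: Or33|]; try apply: val_inj.
Qed.

(* Edges 0, 1, 2 are ab, ac, bc, where a = (0,0), b = (1,0), c = (0,1). *)
Definition tri_src (e : 'I_3) : 'I_3 := if val e == 2%N then tri_b else tri_a.
Definition tri_tgt (e : 'I_3) : 'I_3 := if val e == 0%N then tri_b else tri_c.
Definition triangle_graph : graph := @Graph 'I_3 'I_3 tri_src tri_tgt.

Definition tri_x (v : 'I_3) : nat := (val v == 1)%N.
Definition tri_y (v : 'I_3) : nat := (val v == 2)%N.
Definition tri_pos (v : 'I_3) : R * R := (INR (tri_x v), INR (tri_y v)).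

Definition tri_curve (e : 'I_3) (t : R) : R * R :=
  let p := tri_pos (tri_src e) in let q := tri_pos (tri_tgt e) in
  (p.1 + t * (q.1 - p.1), p.2 + t * (q.2 - p.2)).

Ltac case3 v := case: (ord3_cases v) => ->.

Lemma tri_pos_inj (v w : 'I_3) : tri_pos v = tri_pos w -> v = w.
Proof. by move=> [] /INR_eq + /INR_eq; case3 v; case3 w. Qed.

Lemma tri_no_loop (e : edge triangle_graph) : src e <> tgt e.
Proof. by case3 e. Qed.

Lemma tri_curve_cont1 (e : 'I_3) : continuity (fun t => fst (tri_curve e t)).
Proof. by case3 e; rewrite /tri_curve /tri_pos /=; reg. Qed.

Lemma tri_curve_cont2 (e : 'I_3) : continuity (fun t => snd (tri_curve e t)).
Proof. by case3 e; rewrite /tri_curve /tri_pos /=; reg. Qed.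

Lemma tri_curve_src (e : 'I_3) : tri_curve e R0 = tri_pos (tri_src e).
Proof. by case3 e; rewrite /tri_curve /tri_pos /=; f_equal; ring. Qed.

Lemma tri_curve_tgt (e : 'I_3) : tri_curve e R1 = tri_pos (tri_tgt e).
Proof. by case3 e; rewrite /tri_curve /tri_pos /=; f_equal; ring. Qed.

Lemma tri_curve_inj (e : 'I_3) s t : 0 <= s <= 1 -> 0 <= t <= 1 ->
  tri_curve e s = tri_curve e t -> s = t.
Proof. by move=> _ _; case3 e; rewrite /tri_curve /tri_pos /= => -[]; lra. Qed.

Lemma tri_curve_avoid (e : 'I_3) t v : 0 < t < 1 -> tri_curve e t <> tri_pos v.
Proof. by move=> Ht; case3 e; case3 v; rewrite /tri_curve /tri_pos /= => -[]; lra. Qed.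

Lemma tri_curve_disj (e e' : 'I_3) s t : e <> e' -> 0 < s < 1 -> 0 < t < 1 ->
  tri_curve e s <> tri_curve e' t.
Proof. by move=> + Hs Ht; case3 e; case3 e'; rewrite /tri_curve /tri_pos /= => // _ []; lra. Qed.

Definition triangle : egraph :=
  @EGraph triangle_graph tri_pos tri_curve tri_pos_inj tri_no_loop
    tri_curve_cont1 tri_curve_cont2 tri_curve_src tri_curve_tgt
    tri_curve_inj tri_curve_avoid tri_curve_disj.

End Triangle.

Section LevelSequences.
Variable G : graph.
Variable lv : vert G -> nat.
Variable K : nat.
Variable el : seq (edge G).

Definition elv (e : edge G) := maxn (lv (src e)) (lv (tgt e)).

Definition subl_of (i : nat) : cspace G :=
  @CSpace G (fun v => lv v <= i)%N (fun e => elv e <= i)%N pred0 pred0 false.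

Definition suppair_of (i : nat) : cspace G :=
  @CSpace G predT predT (fun v => i <= lv v)%N
    (fun e => i <= minn (lv (src e)) (lv (tgt e)))%N false.

Definition fbquot_of (j : nat) : cspace G :=
  @CSpace G predT predT
    (fun v => (K - j <= lv v)%N ||
              has (fun e => (K - j <= elv e)%N && ((src e == v) || (tgt e == v))) el)
    (fun e => K - j <= elv e)%N true.

Definition extseq_of (p : nat) : cspace G :=
  if (p < K)%N then subl_of p else suppair_of (K.-1 - (p - K)).

Definition fbseq_of (p : nat) : cspace G :=
  if (p < K)%N then subl_of p else fbquot_of (p - K).+1.

End LevelSequences.

Section SequencesE.
Variable G : egraph.
Variable h : vert G -> nat.
Variable K : nat.
Hypothesis lvl_h : forall v, lvl v = h v.
Hypothesis nlev_K : nlev G = K.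

Let lvl_fun : @lvl G = h := functional_extensionality _ _ lvl_h.

Lemma extseqE : extseq G = extseq_of h K.
Proof.
by rewrite /extseq /extseq_of /subl /subl_of /suppair /suppair_of /elvl /elv nlev_K lvl_fun.
Qed.

Lemma fbseqE el : enum (edge G) = el -> fbseq G = fbseq_of h K el.
Proof.
move=> enum_edge; apply: functional_extensionality => p.
rewrite /fbseq /fbseq_of /subl /subl_of /fbquot /fbquot_of /elvl /elv nlev_K lvl_fun.
case: (p < K)%N => //; congr CSpace; apply: functional_extensionality => v.
by rewrite existsb_has_enum enum_edge.
Qed.

End SequencesE.

Lemma enum_option (T : finType) : enum {: option T} = None :: map Some (enum T).
Proof. by rewrite !enumT [in LHS]unlock. Qed.

Lemma enum_ord2 : enum 'I_2 = [:: ord0; ord_max].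
Proof. by apply: (inj_map val_inj); rewrite val_enum_ord. Qed.

Lemma enum_ord3 : enum 'I_3 = [:: tri_a; tri_b; tri_c].
Proof. by apply: (inj_map val_inj); rewrite val_enum_ord. Qed.

Lemma dgm_out (G : graph) N (S : nat -> cspace G) k b e :
  ~~ (b <= e <= N)%N -> dgm N S k b e = 0%R.
Proof. by move=> /negbTE out; rewrite /dgm; case: (k == 0%N); rewrite /pdiag out. Qed.

Lemma eq_on_iota3 (D D' : nat -> nat -> nat -> int) K N :
  all (fun k => all (fun b => all (fun e => D k b e == D' k b e)
                                  (iota 0 N)) (iota 0 N)) (iota 0 K) ->
  forall k b e, (k < K)%N -> (b < N)%N -> (e < N)%N -> D k b e = D' k b e.
Proof.
move=> /allP HD k b e lt_kK lt_bN lt_eN; apply/eqP.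
move: (HD k); rewrite mem_iota lt_kK => /(_ isT)/allP/(_ b).
by rewrite mem_iota lt_bN => /(_ isT)/allP/(_ e); rewrite mem_iota lt_eN => /(_ isT).
Qed.

Lemma digon_lvl (v : vert digon) : lvl v = val v.
Proof. by apply: (@lvlE _ _ 2) => // [w|y lt_y2]; [exact: ltn_ord | exists (Ordinal lt_y2)]. Qed.

Lemma digon_nlev : nlev digon = 2.
Proof. by apply: (@nlevE digon (@nat_of_ord 2)) => // y lt_y2; exists (Ordinal lt_y2). Qed.

Lemma tri_y_onto y : (y < 2)%N -> exists v, tri_y v = y.
Proof. by case: y => [|[|]] // _; [exists tri_a | exists tri_c]. Qed.

Lemma triangle_lvl (v : vert triangle) : lvl v = tri_y v.
Proof. by apply: (@lvlE _ _ 2) => // [w|]; [exact: leq_b1 | exact: tri_y_onto]. Qed.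

Lemma triangle_nlev : nlev triangle = 2.
Proof. by apply: (@nlevE triangle tri_y) => // [w|]; [exact: leq_b1 | exact: tri_y_onto]. Qed.

Definition digon_cells : seq (option 'I_2) := None :: map Some [:: ord0; ord_max].
Definition triangle_cells : seq (option 'I_3) := None :: map Some [:: tri_a; tri_b; tri_c].

Lemma digon_dgm N (S : nat -> cspace digon) k b e : dgm N S k b e =
  @dgm_bits digon digon_cells [:: ord0; ord_max] [:: ord0; ord_max] ord0 3 2 N S k b e.
Proof.
apply: dgm_bitsE; rewrite /Defs.d0 /Defs.d1 ?card_option ?card_ord ?enum_option ?enum_ord2 //.
Qed.

Lemma triangle_dgm N (S : nat -> cspace triangle) k b e : dgm N S k b e =
  @dgm_bits triangle triangle_cells [:: tri_a; tri_b; tri_c] [:: tri_a; tri_b; tri_c]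
    tri_a 4 3 N S k b e.
Proof.
apply: dgm_bitsE; rewrite /Defs.d0 /Defs.d1 ?card_option ?card_ord ?enum_option ?enum_ord3 //.
Qed.

Lemma EP_digon_triangle k b e : (k <= 1)%N -> EPdgm digon k b e = EPdgm triangle k b e.
Proof.
move=> le_k1; rewrite /EPdgm digon_nlev triangle_nlev.
have [/andP[le_be le_e3]|out] := boolP (b <= e <= 3)%N; last by rewrite !dgm_out.
rewrite (extseqE digon_lvl digon_nlev) (extseqE triangle_lvl triangle_nlev).
have lt_b4 : (b < 4)%N := leq_trans le_be le_e3.
rewrite digon_dgm triangle_dgm; apply: (@eq_on_iota3 _ _ 2 4 _ k b e le_k1 lt_b4 le_e3).
by vm_compute.
Qed.

Lemma FB_digon_triangle : FBdgm digon 1 1 1 <> FBdgm triangle 1 1 1.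
Proof.
rewrite /FBdgm (fbseqE digon_lvl digon_nlev enum_ord2).
rewrite (fbseqE triangle_lvl triangle_nlev enum_ord3) digon_nlev triangle_nlev.
by rewrite digon_dgm triangle_dgm; vm_compute.
Qed.

Theorem proposition5 :
  exists G H : egraph,
    (exists k b d : nat, (k <= 1)%N /\ FBdgm G k b d <> FBdgm H k b d) /\
    (forall k b d : nat, (k <= 1)%N -> EPdgm G k b d = EPdgm H k b d).
Proof.
exists digon, triangle; split; last exact: EP_digon_triangle.
by exists 1%N, 1%N, 1%N; split; last exact: FB_digon_triangle.
Qed.
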